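(* Given integers $t,q\geqslant1$, there is a constant $C>0$ such that \[\frac{\sigma(n)}{n\log\log n}\geqslant C\] for infinitely many positive integers $n$ with $n\equiv t\pmod q$.
   Context: $\sigma(n)$ denotes the sum of the positive divisors of $n$. *)

From Stdlib Require Import Reals Arith List.
Open Scope R_scope.

(* sigma_div n = sum of the positive divisors of n (sigma 0 = 0, irrelevant). *)
Definition sigma_div (n : nat) : nat :=
  fold_right Nat.add 0%nat
    (filter (fun d => Nat.eqb (n mod d) 0) (seq 1 n)).

From Pilot Require Import Defs.
From Stdlib Require Import Reals Arith List Lia Lra.
Open Scope R_scope.

(* Take n = t * prod_{j<J} (1 + q j), which is congruent to t modulo q.  The
   numbers n / (1 + q j), j < J, are distinct divisors of n, and their sum is at
   least (n / q) ln (J + 1) by comparison with the harmonic series.  On the other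
   hand n <= J^(3J) once J >= t, q, so ln ln n < 3 ln J, and the ratio
   sigma(n) / (n ln ln n) stays above 1 / (3q) as J grows. *)

Lemma list_sum_le_incl (l m : list nat) :
  NoDup l -> incl l m -> (list_sum l <= list_sum m)%nat.
Proof.
  revert m; induction l as [|a l IH]; intros m Hnd Hincl; simpl; [lia|].
  apply NoDup_cons_iff in Hnd as [Ha Hnd].
  destruct (in_split a m (Hincl a (in_eq a l))) as (m1 & m2 & ->).
  assert (Hrest : incl l (m1 ++ m2)).
  { intros x Hx. specialize (Hincl x (in_cons a x l Hx)).
    apply in_app_or in Hincl as [H|[<-|H]]; apply in_or_app; tauto. }
  specialize (IH _ Hnd Hrest).
  rewrite !list_sum_app in *; simpl; lia.
Qed.

Lemma sigma_div_ge_list_sum (n : nat) (l : list nat) :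
  (0 < n)%nat -> NoDup l -> (forall d, In d l -> Nat.divide d n) ->
  (list_sum l <= sigma_div n)%nat.
Proof.
  intros Hn Hnd Hdiv. apply list_sum_le_incl; [exact Hnd|].
  intros d Hd. destruct (Hdiv d Hd) as [k Hk].
  assert (0 < d)%nat by (destruct d; lia).
  assert (0 < k)%nat by (destruct k; lia).
  apply filter_In; split.
  - apply in_seq. nia.
  - apply Nat.eqb_eq. rewrite Hk. apply Nat.Div0.mod_mul.
Qed.

Fixpoint progression_prod (q J : nat) : nat :=
  match J with
  | O => 1
  | S J => progression_prod q J * (1 + q * J)
  end.

Lemma progression_prod_mod (q J : nat) : progression_prod q J mod q = 1 mod q.
Proof.
  induction J as [|J IH]; cbn [progression_prod]; [reflexivity|].
  rewrite Nat.Div0.mul_mod, IH, <- Nat.Div0.mul_mod, Nat.mul_1_l.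
  rewrite (Nat.mul_comm q J). apply Nat.Div0.mod_add.
Qed.

Lemma progression_prod_divide (q J j : nat) :
  (j < J)%nat -> Nat.divide (1 + q * j) (progression_prod q J).
Proof.
  induction J as [|J IH]; intros Hj; [lia|]; simpl.
  destruct (Nat.eq_dec j J) as [->|Hne].
  - apply Nat.divide_factor_r.
  - apply Nat.divide_mul_l, IH; lia.
Qed.

Lemma progression_prod_bounds (q J : nat) : (1 <= q)%nat ->
  (J <= progression_prod q J <= (q * J) ^ J)%nat.
Proof.
  intros Hq; induction J as [|J IH]; simpl; [lia|].
  split; [destruct J; simpl in *; nia|].
  rewrite (Nat.mul_comm _ (1 + q * J)). apply Nat.mul_le_mono; [lia|].
  eapply Nat.le_trans; [apply IH|]. apply Nat.pow_le_mono_l; lia.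
Qed.

Lemma ln_le_sub_1 (x : R) : 0 < x -> ln x <= x - 1.
Proof.
  intros Hx. rewrite <- (exp_ln x) at 2 by exact Hx.
  pose proof (exp_ineq1_le (ln x)). lra.
Qed.

Lemma ln_succ_sub_ln_le (x : R) : 0 < x -> ln (x + 1) - ln x <= / x.
Proof.
  intros Hx.
  replace (ln (x + 1) - ln x) with (ln ((x + 1) / x)).
  - replace (/ x) with ((x + 1) / x - 1) by (field; lra).
    apply ln_le_sub_1, Rdiv_lt_0_compat; lra.
  - unfold Rdiv. rewrite ln_mult, ln_Rinv; try lra. apply Rinv_0_lt_compat; lra.
Qed.

Lemma INR_div_exact (n d : nat) :
  (0 < d)%nat -> Nat.divide d n -> INR (n / d) = INR n / INR d.
Proof.
  intros Hd [k ->]. rewrite Nat.div_mul by lia. rewrite mult_INR.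
  field. apply not_0_INR. lia.
Qed.

Lemma harmonic_progression_ge (q n J : nat) : (1 <= q)%nat ->
  (forall j, (j < J)%nat -> Nat.divide (1 + q * j) n) ->
  INR n / INR q * ln (INR J + 1) <=
  INR (list_sum (map (fun j => (n / (1 + q * j))%nat) (seq 0 J))).
Proof.
  intros Hq; induction J as [|J IH]; intros Hdiv.
  - rewrite Rplus_0_l, ln_1. simpl. lra.
  - specialize (IH (fun j Hj => Hdiv j (Nat.lt_lt_succ_r j J Hj))).
    rewrite seq_S, map_app, list_sum_app, plus_INR. cbn [map list_sum fold_right].
    rewrite Nat.add_0_l, Nat.add_0_r, INR_div_exact, S_INR by (auto || lia).
    assert (HqR : 1 <= INR q) by (apply (le_INR 1); lia).
    assert (HJ : 0 <= INR J) by apply pos_INR.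
    assert (Hn : 0 <= INR n / INR q).
    { apply Rmult_le_pos; [apply pos_INR | apply Rlt_le, Rinv_0_lt_compat; lra]. }
    assert (Hden : 0 < INR (1 + q * J)) by (apply lt_0_INR; lia).
    assert (Hden_le : INR (1 + q * J) <= INR q * (INR J + 1)).
    { rewrite <- S_INR, <- mult_INR. apply le_INR. nia. }
    assert (Hstep : INR n / INR q * (ln (INR J + 1 + 1) - ln (INR J + 1)) <=
                    INR n / INR (1 + q * J)).
    { apply Rle_trans with (INR n / INR q * / (INR J + 1)).
      - apply Rmult_le_compat_l; [exact Hn|]. apply ln_succ_sub_ln_le. lra.
      - unfold Rdiv. rewrite Rmult_assoc, <- Rinv_mult.
        apply Rmult_le_compat_l; [apply pos_INR|]. apply Rinv_le_contravar; lra. }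
    rewrite Rmult_minus_distr_l in Hstep. lra.
Qed.

Lemma cofactor_inj (n d e : nat) : (0 < n)%nat ->
  Nat.divide d n -> Nat.divide e n -> (n / d = n / e)%nat -> d = e.
Proof.
  intros Hn [k Hk] [m Hm]. subst n.
  assert (0 < d /\ 0 < k)%nat as [Hd Hk] by (split; destruct d, k; lia).
  rewrite Nat.div_mul by lia.
  rewrite Hm, Nat.div_mul by (destruct e; lia).
  intros <-. nia.
Qed.

Lemma progression_cofactors_le_sigma (q n J : nat) : (1 <= q)%nat -> (0 < n)%nat ->
  (forall j, (j < J)%nat -> Nat.divide (1 + q * j) n) ->
  (list_sum (map (fun j => n / (1 + q * j)) (seq 0 J)) <= sigma_div n)%nat.
Proof.
  intros Hq Hn Hdiv. apply sigma_div_ge_list_sum; [exact Hn| |].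
  - apply NoDup_map_NoDup_ForallPairs; [|apply seq_NoDup].
    intros i j Hi Hj Heq. apply in_seq in Hi, Hj.
    apply (cofactor_inj n) in Heq; [nia | exact Hn | apply Hdiv; lia ..].
  - intros d Hd. apply in_map_iff in Hd as (j & <- & Hj). apply in_seq in Hj.
    destruct (Hdiv j ltac:(lia)) as [k Hk].
    exists (1 + q * j)%nat. rewrite Hk, Nat.div_mul by lia. apply Nat.mul_comm.
Qed.

Lemma ln_le_ln (x y : R) : 0 < x -> x <= y -> ln x <= ln y.
Proof.
  intros Hx [Hlt|<-]; [now apply Rlt_le, ln_increasing | apply Rle_refl].
Qed.

Lemma ln_ln_bounds (J n : nat) : (2 <= J)%nat -> (4 <= n)%nat -> (n <= J ^ (3 * J))%nat ->
  0 < ln (ln (INR n)) < 3 * ln (INR J).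
Proof.
  intros HJ Hn HnJ.
  assert (HJR : 2 <= INR J) by (apply (le_INR 2) in HJ; simpl in HJ; lra).
  assert (HnR : 4 <= INR n) by (apply (le_INR 4) in Hn; simpl in Hn; lra).
  assert (Hln1 : 1 < ln (INR n)).
  { rewrite <- ln_exp at 1. apply ln_increasing; [apply exp_pos|].
    pose proof exp_le_3. lra. }
  assert (HlnJ : ln (INR J) <= INR J - 1) by (apply ln_le_sub_1; lra).
  assert (Hlnn : ln (INR n) <= INR (3 * J) * ln (INR J)).
  { rewrite <- ln_pow by lra. apply ln_le_ln; [lra|].
    rewrite <- pow_INR. now apply le_INR. }
  rewrite mult_INR in Hlnn.
  assert (HlnJ0 : 0 < ln (INR J)) by (rewrite <- ln_1; apply ln_increasing; lra).
  split.
  - rewrite <- ln_1. apply ln_increasing; lra.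
  - replace (3 * ln (INR J)) with (ln (INR J ^ 3)) by (rewrite ln_pow by lra; simpl; lra).
    apply ln_increasing; [lra|]. simpl INR in Hlnn. nra.
Qed.

Lemma scaled_progression_prod_le (t q J : nat) : (1 <= q <= J)%nat -> (t <= J)%nat ->
  (t * progression_prod q J <= J ^ (3 * J))%nat.
Proof.
  intros Hq Ht.
  apply Nat.le_trans with (J ^ J * (J * J) ^ J)%nat.
  - apply Nat.mul_le_mono.
    + apply (Nat.le_trans _ J _ Ht). rewrite <- (Nat.pow_1_r J) at 1.
      apply Nat.pow_le_mono_r; lia.
    + eapply Nat.le_trans; [apply progression_prod_bounds; lia|].
      apply Nat.pow_le_mono_l. nia.
  - rewrite Nat.pow_mul_l, <- !Nat.pow_add_r. apply Nat.pow_le_mono_r; lia.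
Qed.

Theorem lemma5p7 (t q : nat) (ht : (1 <= t)%nat) (hq : (1 <= q)%nat) :
  exists C : R, 0 < C /\
    forall N : nat, exists n : nat,
      (N < n)%nat /\ Nat.modulo n q = Nat.modulo t q /\
      INR (Defs.sigma_div n) / (INR n * ln (ln (INR n))) >= C.
Proof.
  assert (HqR : 0 < INR q) by (apply lt_0_INR; lia).
  exists (/ (3 * INR q)). split; [apply Rinv_0_lt_compat; lra|].
  intros N. set (J := (N + t + q + 4)%nat). set (n := (t * progression_prod q J)%nat).
  assert (HJn : (J <= n)%nat) by (pose proof (progression_prod_bounds q J hq); unfold n; nia).
  assert (Hdiv : forall j, (j < J)%nat -> Nat.divide (1 + q * j) n).
  { intros j Hj. apply Nat.divide_mul_r, progression_prod_divide, Hj. }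
  exists n; split; [|split].
  - lia.
  - unfold n. rewrite Nat.Div0.mul_mod, progression_prod_mod, <- Nat.Div0.mul_mod.
    now rewrite Nat.mul_1_r.
  - assert (Hsigma : INR n / INR q * ln (INR J + 1) <= INR (sigma_div n)).
    { eapply Rle_trans; [now apply harmonic_progression_ge|].
      apply le_INR, progression_cofactors_le_sigma; auto; lia. }
    destruct (ln_ln_bounds J n) as [HL0 HL]; [lia .. | apply scaled_progression_prod_le; lia |].
    assert (HJR : 0 < INR J) by (apply lt_0_INR; lia).
    assert (HlnJ : ln (INR J) <= ln (INR J + 1)) by (apply ln_le_ln; lra).
    assert (HnR : 0 < INR n) by (apply lt_0_INR; lia).
    apply Rle_ge.
    replace (/ (3 * INR q)) with (INR n / INR q * (ln (ln (INR n)) / 3) / (INR n * ln (ln (INR n))))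
      by (field; lra).
    apply Rmult_le_compat_r; [apply Rlt_le, Rinv_0_lt_compat, Rmult_lt_0_compat; lra|].
    eapply Rle_trans; [|exact Hsigma].
    apply Rmult_le_compat_l; [apply Rlt_le, Rdiv_lt_0_compat; lra | lra].
Qed.
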